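(* Let $S$ be a multiplicative subset of $R$ and $M=R_S$, regarded as an $R$-module. The following are equivalent: (i) $M$ is prime as an $R$-module; (ii) $\mathrm{Ann}_R(M)$ is a prime ideal of $R$; (iii) $R_S$ is an integral domain; (iv) there exists $\mathfrak p\in\mathrm{Spec}(R)$ with $M\ne 0$ and a monomorphism of $R$-modules $M\hookrightarrow\kappa(\mathfrak p)=R_{\mathfrak p}/\mathfrak pR_{\mathfrak p}$.
   Context: $R$ is a commutative Noetherian local ring. A module $M\neq0$ is prime if every $r\in R$ acts on $M$ either as zero or injectively. *)

(* Localizations are represented setoid-style: an element of
   a localization D^{-1}R is a pair (numerator, denominator) in R * R whose
   denominator lies in D, and equality of fractions is the usual relation. *)
From mathcomp Require Import all_boot all_order all_algebra.
Set Implicit Arguments. Unset Strict Implicit. Unset Printing Implicit Defensive.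
Import GRing.Theory.
Local Open Scope ring_scope.

Section Defs.
Variable R : comNzRingType.

Definition is_ideal (I : R -> Prop) : Prop :=
  I 0 /\ (forall a b, I a -> I b -> I (a + b)) /\ (forall r a, I a -> I (r * a)).

Definition prime_ideal (I : R -> Prop) : Prop :=
  is_ideal I /\ ~ I 1 /\ (forall a b, I (a * b) -> I a \/ I b).

Definition maximal_ideal (m : R -> Prop) : Prop :=
  is_ideal m /\ ~ m 1 /\
  (forall J : R -> Prop, is_ideal J -> ~ J 1 -> (forall x, m x -> J x) ->
     forall x, J x -> m x).

Definition noetherian_ring : Prop :=
  forall I : nat -> R -> Prop, (forall n, is_ideal (I n)) ->
    (forall n x, I n x -> I n.+1 x) ->
    exists N, forall n x, (N <= n)%N -> I n x -> I N x.

Definition local_ring : Prop :=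
  exists m, maximal_ideal m /\
    forall m', maximal_ideal m' -> forall x, m' x <-> m x.

Definition multiplicative (S : R -> Prop) : Prop :=
  S 1 /\ (forall a b, S a -> S b -> S (a * b)).

Definition isfrac (D : R -> Prop) (x : R * R) : Prop := D x.2.
Definition frac_eq (D : R -> Prop) (x y : R * R) : Prop :=
  exists t, D t /\ t * (x.1 * y.2 - y.1 * x.2) = 0.
Definition frac0 : R * R := (0, 1).
Definition frac1 : R * R := (1, 1).
Definition frac_add (x y : R * R) : R * R := (x.1 * y.2 + y.1 * x.2, x.2 * y.2).
Definition frac_opp (x : R * R) : R * R := (- x.1, x.2).
Definition frac_mul (x y : R * R) : R * R := (x.1 * y.1, x.2 * y.2).
Definition frac_scale (a : R) (x : R * R) : R * R := (a * x.1, x.2).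

Definition locM_nonzero (S : R -> Prop) : Prop :=
  exists x, isfrac S x /\ ~ frac_eq S x frac0.

Definition locM_prime (S : R -> Prop) : Prop :=
  locM_nonzero S /\
  forall r : R,
    (forall x, isfrac S x -> frac_eq S (frac_scale r x) frac0) \/
    (forall x y, isfrac S x -> isfrac S y ->
       frac_eq S (frac_scale r x) (frac_scale r y) -> frac_eq S x y).

Definition locM_ann (S : R -> Prop) (r : R) : Prop :=
  forall x, isfrac S x -> frac_eq S (frac_scale r x) frac0.

Definition loc_idomain (S : R -> Prop) : Prop :=
  ~ frac_eq S frac1 frac0 /\
  forall x y, isfrac S x -> isfrac S y ->
    frac_eq S (frac_mul x y) frac0 -> frac_eq S x frac0 \/ frac_eq S y frac0.

Definition compl (p : R -> Prop) (s : R) : Prop := ~ p s.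

Definition pRp (p : R -> Prop) (z : R * R) : Prop :=
  exists a t, p a /\ ~ p t /\ frac_eq (compl p) z (a, t).

Definition kappa_eq (p : R -> Prop) (x y : R * R) : Prop :=
  pRp p (frac_add x (frac_opp y)).

(* f is (a representative-level description of) an R-module monomorphism
   R_S -> kappa(p). *)
Definition loc_mono_to_kappa (S p : R -> Prop) (f : R * R -> R * R) : Prop :=
  (forall x, isfrac S x -> isfrac (compl p) (f x)) /\
  (forall x y, isfrac S x -> isfrac S y -> frac_eq S x y -> kappa_eq p (f x) (f y)) /\
  (forall x y, isfrac S x -> isfrac S y ->
     kappa_eq p (f (frac_add x y)) (frac_add (f x) (f y))) /\
  (forall r x, isfrac S x -> kappa_eq p (f (frac_scale r x)) (frac_scale r (f x))) /\
  (forall x y, isfrac S x -> isfrac S y -> kappa_eq p (f x) (f y) -> frac_eq S x y).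

End Defs.

From mathcomp Require Import all_boot all_order all_algebra.
From mathcomp Require Import ring.
From Stdlib Require Import Classical.
Set Implicit Arguments. Unset Strict Implicit. Unset Printing Implicit Defensive.
Local Open Scope ring_scope.

(* Everything is reduced to the kernel  K_S = {r | t r = 0 for some t in S}
   of the canonical map R -> R_S:
   - a fraction x is zero in R_S iff x.1 is in K_S, and Ann_R(R_S) = K_S;
   - both "R_S is a prime module" and "R_S is a domain" say that K_S is a
     prime ideal;
   - equality in kappa(p) of fractions with denominators outside p is the
     relation  p (z.1 w.2 - w.1 z.2); in kappa(p) every r in p acts as zero
     and every r outside p acts injectively, and a monomorphism R_S ->
     kappa(p) transports this dichotomy back to R_S;
   - conversely, when K_S is prime the identity map R_S -> kappa(K_S) is a
     monomorphism. *)

Section PrimeIdeals.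
Variables (R : comNzRingType) (p : R -> Prop).
Hypothesis p_prime : prime_ideal p.
Import GRing.Theory.

Lemma prime0 : p 0.
Proof. by case: p_prime => -[]. Qed.

Lemma prime_not1 : ~ p 1.
Proof. by case: p_prime => _ []. Qed.

Lemma primeD a b : p a -> p b -> p (a + b).
Proof. by case: p_prime => -[_ [pD _]] _; apply: pD. Qed.

Lemma primeMl r a : p a -> p (r * a).
Proof. by case: p_prime => -[_ [_ pM]] _; apply: pM. Qed.

Lemma primeMP a b : p (a * b) -> p a \/ p b.
Proof. by case: p_prime => _ [_ pP]; apply: pP. Qed.

Lemma prime_notM a b : ~ p a -> ~ p b -> ~ p (a * b).
Proof. by move=> npa npb /primeMP []. Qed.

End PrimeIdeals.

Lemma prime_ideal_ext (R : comNzRingType) (p q : R -> Prop) :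
  (forall x, p x <-> q x) -> prime_ideal p -> prime_ideal q.
Proof.
move=> E [[p0 [pD pM]] [p1 pP]]; split; [split; [|split]|split].
- exact/E.
- by move=> a b /E pa /E pb; apply/E; apply: pD.
- by move=> r a /E pa; apply/E; apply: pM.
- by move/E.
- by move=> a b /E /pP [] ?; [left|right]; apply/E.
Qed.

Section Localization.
Variables (R : comNzRingType) (S : R -> Prop).
Hypothesis S_mul : multiplicative S.
Import GRing.Theory.

Definition loc_kernel (r : R) : Prop := exists t, S t /\ t * r = 0.

Lemma loc_kernel_ideal : is_ideal loc_kernel.
Proof.
case: S_mul => S1 SM; split; [|split].
- by exists 1; rewrite mulr0.
- move=> a b [t [St ta0]] [u [Su ub0]]; exists (t * u); split; first exact: SM.
  have -> : t * u * (a + b) = (t * a) * u + (u * b) * t by ring.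
  by rewrite ta0 ub0 !mul0r addr0.
- move=> r a [t [St ta0]]; exists t; split=> //.
  have -> : t * (r * a) = (t * a) * r by ring.
  by rewrite ta0 mul0r.
Qed.

Lemma loc_kernelMl r a : loc_kernel a -> loc_kernel (r * a).
Proof. by case: loc_kernel_ideal => _ [_]; apply. Qed.

(* Elements of S are invertible in R_S, so they can be cancelled. *)
Lemma loc_kernel_cancel s a : S s -> loc_kernel (s * a) -> loc_kernel a.
Proof.
move=> Ss [t [St tsa0]]; exists (t * s); split; first exact: S_mul.2.
by rewrite -mulrA.
Qed.

(* R_S is the zero ring iff 1 lies in the kernel; otherwise S avoids it. *)
Lemma S_not_kernel s : ~ loc_kernel 1 -> S s -> ~ loc_kernel s.
Proof. by move=> k1 Ss ks; apply: k1; apply: (loc_kernel_cancel Ss); rewrite mulr1. Qed.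

Lemma frac_eq0E x : frac_eq S x (frac0 R) <-> loc_kernel x.1.
Proof.
by split=> -[t [St H]]; exists t; split=> //; rewrite -H /frac0 /=; ring.
Qed.

Lemma frac_eq_scaleE r x y :
  frac_eq S (frac_scale r x) (frac_scale r y) <->
  loc_kernel (r * (x.1 * y.2 - y.1 * x.2)).
Proof.
rewrite /frac_eq /=.
have -> : r * x.1 * y.2 - r * y.1 * x.2 = r * (x.1 * y.2 - y.1 * x.2) by ring.
by [].
Qed.

Lemma locM_annE r : locM_ann S r <-> loc_kernel r.
Proof.
split=> [ann_r|kr x _].
  by move/frac_eq0E: (ann_r (frac1 R) S_mul.1); rewrite /= mulr1.
by apply/frac_eq0E; rewrite /= mulrC; apply: loc_kernelMl.
Qed.

Lemma locM_nonzeroE : locM_nonzero S <-> ~ loc_kernel 1.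
Proof.
split=> [[x [_ nx]] k1|k1]; last by exists (frac1 R); split; [exact: S_mul.1|move/frac_eq0E].
by apply/nx/frac_eq0E; rewrite -[x.1]mulr1; apply: loc_kernelMl.
Qed.

Lemma locM_prime_kernel : locM_prime S <-> prime_ideal loc_kernel.
Proof.
split=> [[/locM_nonzeroE k1 zero_or_inj]|kprime].
  split; [exact: loc_kernel_ideal|split=> // a b kab].
  case: (zero_or_inj a) => [a_zero|a_inj].
    by left; move/frac_eq0E: (a_zero (frac1 R) S_mul.1); rewrite /= mulr1.
  right; have /frac_eq0E // : frac_eq S (b, 1) (frac0 R).
  apply: a_inj; [exact: S_mul.1|exact: S_mul.1|apply/frac_eq_scaleE].
  by rewrite /= !mulr1 subr0.
split; first by apply/locM_nonzeroE; exact: prime_not1.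
move=> r; case: (classic (loc_kernel r)) => [kr|nkr].
  by left=> x _; apply/frac_eq0E; rewrite /= mulrC; apply: loc_kernelMl.
by right=> x y _ _ /frac_eq_scaleE /(primeMP kprime) [].
Qed.

Lemma loc_idomain_kernel : loc_idomain S <-> prime_ideal loc_kernel.
Proof.
split=> [[n1 domain]|kprime].
  split; [exact: loc_kernel_ideal|split; first by move/frac_eq0E: n1].
  move=> a b kab; have [] := domain (a, 1) (b, 1) S_mul.1 S_mul.1.
  - exact/frac_eq0E.
  - by move/frac_eq0E; left.
  - by move/frac_eq0E; right.
split; first by move/frac_eq0E; exact: prime_not1.
move=> x y _ _ /frac_eq0E /(primeMP kprime) [] ?; [left|right]; exact/frac_eq0E.
Qed.

End Localization.

Section ResidueField.
Variables (R : comNzRingType) (p : R -> Prop).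
Hypothesis p_prime : prime_ideal p.
Import GRing.Theory.

(* Cross-multiplication relation: equality in kappa(p) for fractions whose
   denominators avoid p. *)
Definition kappa_rel (z w : R * R) : Prop := p (z.1 * w.2 - w.1 * z.2).

Lemma kappa_rel_of_eq z w : kappa_eq p z w -> kappa_rel z w.
Proof.
move=> [a [t [pa [npt [u [npu Hu]]]]]].
have put : p (u * t * (z.1 * w.2 - w.1 * z.2)).
  have -> : u * t * (z.1 * w.2 - w.1 * z.2) = u * (z.2 * w.2) * a.
    apply/eqP; rewrite -subr_eq0; apply/eqP; rewrite -[RHS]Hu /=; ring.
  exact: (primeMl p_prime).
by have [/(primeMP p_prime) []|] := primeMP p_prime put.
Qed.

Lemma kappa_eq_of_rel z w : ~ p z.2 -> ~ p w.2 -> kappa_rel z w -> kappa_eq p z w.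
Proof.
move=> npz npw Hzw; exists (z.1 * w.2 - w.1 * z.2), (z.2 * w.2).
split=> //; split; first exact: (prime_notM p_prime).
by exists 1; split; [exact: prime_not1|rewrite /=; ring].
Qed.

Lemma kappa_rel_refl z : kappa_rel z z.
Proof. by rewrite /kappa_rel subrr; exact: (prime0 p_prime). Qed.

Lemma kappa_rel_sym z w : kappa_rel z w -> kappa_rel w z.
Proof.
move=> /(primeMl p_prime (-1)).
have -> : -1 * (z.1 * w.2 - w.1 * z.2) = w.1 * z.2 - z.1 * w.2 by ring.
by [].
Qed.

Lemma kappa_rel_trans w z v : ~ p w.2 -> kappa_rel z w -> kappa_rel w v -> kappa_rel z v.
Proof.
move=> npw Hzw Hwv.
have : p (w.2 * (z.1 * v.2 - v.1 * z.2)).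
  have -> : w.2 * (z.1 * v.2 - v.1 * z.2) =
    v.2 * (z.1 * w.2 - w.1 * z.2) + z.2 * (w.1 * v.2 - v.1 * w.2) by ring.
  by apply: (primeD p_prime); apply: primeMl.
by case/(primeMP p_prime).
Qed.

Lemma kappa_scale_zero r z : p r -> kappa_rel (frac_scale r z) (frac0 R).
Proof.
move=> pr; rewrite /kappa_rel /=.
have -> : r * z.1 * 1 - 0 * z.2 = z.1 * r by ring.
exact: (primeMl p_prime).
Qed.

Lemma kappa_scale_cancel r z w :
  ~ p r -> kappa_rel (frac_scale r z) (frac_scale r w) -> kappa_rel z w.
Proof.
rewrite /kappa_rel /=.
have -> : r * z.1 * w.2 - r * w.1 * z.2 = r * (z.1 * w.2 - w.1 * z.2) by ring.
by move=> npr /(primeMP p_prime) [].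
Qed.

End ResidueField.

Section MonoToKappa.
Variables (R : comNzRingType) (S p : R -> Prop) (f : R * R -> R * R).
Hypotheses (S_mul : multiplicative S) (p_prime : prime_ideal p).
Hypothesis f_mono : loc_mono_to_kappa S p f.
Import GRing.Theory.

Let f_den x : isfrac S x -> ~ p (f x).2.
Proof. by case: f_mono => H _; apply: H. Qed.

Let f_scale r x : isfrac S x -> kappa_rel p (f (frac_scale r x)) (frac_scale r (f x)).
Proof. by case: f_mono => _ [_ [_ [H _]]] Sx; apply: (kappa_rel_of_eq p_prime); apply: H. Qed.

Let f_reflect x y : isfrac S x -> isfrac S y ->
  kappa_rel p (f x) (f y) -> frac_eq S x y.
Proof.
case: f_mono => _ [_ [_ [_ H]]] Sx Sy Hxy.
by apply: H => //; apply: (kappa_eq_of_rel p_prime) => //; apply: f_den.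
Qed.

Lemma mono_scale_zero r x : p r -> isfrac S x -> kappa_rel p (f (frac_scale r x)) (frac0 R).
Proof.
move=> pr Sx.
apply: (kappa_rel_trans (w := frac_scale r (f x)) p_prime (f_den Sx) (f_scale r Sx)).
exact: (kappa_scale_zero p_prime).
Qed.

(* (iv) -> (i): a nonzero submodule of the prime module kappa(p) is prime. *)
Lemma mono_to_kappa_prime : locM_nonzero S -> locM_prime S.
Proof.
move=> nz; split=> // r; case: (classic (p r)) => [pr|npr].
  left=> x Sx.
  have : frac_eq S (frac_scale r x) (frac_scale 0 x).
    apply: f_reflect => //.
    apply: (kappa_rel_trans (w := frac0 R) p_prime _ (mono_scale_zero pr Sx)).
      exact: (prime_not1 p_prime).
    by apply: (kappa_rel_sym p_prime); apply: mono_scale_zero => //; exact: (prime0 p_prime).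
  move=> eq_scale0; apply/frac_eq0E; move: eq_scale0; rewrite /frac_eq /=.
  have -> : r * x.1 * x.2 - 0 * x.1 * x.2 = x.2 * (r * x.1) by ring.
  exact: loc_kernel_cancel.
right=> x y Sx Sy Hxy; apply: f_reflect => //.
apply: (kappa_scale_cancel p_prime npr).
have fxy : kappa_rel p (f (frac_scale r x)) (f (frac_scale r y)).
  by case: f_mono => _ [H _]; apply: (kappa_rel_of_eq p_prime); apply: H.
apply: (kappa_rel_trans (w := f (frac_scale r x)) p_prime (f_den (x := frac_scale r x) Sx)).
  exact: (kappa_rel_sym p_prime (f_scale r Sx)).
exact: (kappa_rel_trans p_prime (f_den (x := frac_scale r y) Sy) fxy (f_scale r Sy)).
Qed.

End MonoToKappa.

Section KernelToKappa.
Variables (R : comNzRingType) (S : R -> Prop).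
Hypotheses (S_mul : multiplicative S) (kprime : prime_ideal (loc_kernel S)).

Lemma kernel_mono_to_kappa : loc_mono_to_kappa S (loc_kernel S) id.
Proof.
have den x : isfrac S x -> ~ loc_kernel S x.2.
  by apply: (S_not_kernel S_mul); exact: (prime_not1 kprime).
have refl z : isfrac S z -> kappa_eq (loc_kernel S) z z.
  by move=> Sz; apply: (kappa_eq_of_rel kprime); [exact: den|exact: den|exact: kappa_rel_refl].
split; [exact: den|split; [|split; [|split]]].
- by move=> x y Sx Sy Hxy; apply: (kappa_eq_of_rel kprime); [exact: den|exact: den|].
- by move=> x y Sx Sy; apply: refl; exact: S_mul.2.
- by move=> r x Sx; apply: refl.
- by move=> x y Sx Sy /(kappa_rel_of_eq kprime).
Qed.

End KernelToKappa.

Theorem lemma1p6 (R : comNzRingType) (S : R -> Prop) :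
  noetherian_ring R -> local_ring R -> multiplicative S ->
  (locM_prime S <-> prime_ideal (locM_ann S)) /\
  (prime_ideal (locM_ann S) <-> loc_idomain S) /\
  (loc_idomain S <->
     exists p : R -> Prop, prime_ideal p /\ locM_nonzero S /\
       exists f : R * R -> R * R, loc_mono_to_kappa S p f).
Proof.
move=> _ _ S_mul.
have ann_kernel : prime_ideal (locM_ann S) <-> prime_ideal (loc_kernel S).
  by split; apply: prime_ideal_ext => r; [|apply: iff_sym]; exact: locM_annE.
split; first exact: iff_trans (locM_prime_kernel S_mul) (iff_sym ann_kernel).
split; first exact: iff_trans ann_kernel (iff_sym (loc_idomain_kernel S_mul)).
split=> [/(loc_idomain_kernel S_mul) kprime|[p [p_prime [nz [f f_mono]]]]].
  exists (loc_kernel S); split=> //; split; last by exists id; exact: kernel_mono_to_kappa.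
  by apply/(locM_nonzeroE S_mul); exact: (prime_not1 kprime).
apply/(loc_idomain_kernel S_mul)/(locM_prime_kernel S_mul).
exact: mono_to_kappa_prime f_mono nz.
Qed.
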